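(* Let $D$ be a digraph and let $S$ be the set of all sources and sinks of $D$. Then $\operatorname{bw}(u(D))-|S|\le\operatorname{dbw}(D)\le\operatorname{bw}(u(D))$.
   Context: All digraphs are finite and loopless. A source has no incoming edges, a sink no outgoing edges. $u(D)$ is the undirected multigraph with one edge $xy$ per directed edge $\vec{xy}$. Branch-width of an undirected multigraph $G$: minimum over pairs $(T,\tau)$ ($T$ a tree of maximum degree at most three, $\tau$ a bijection from leaves of $T$ onto $E(G)$) of the maximum over edges $t$ of $T$ of the number of vertices incident both with an edge of $\tau(Y)$ and an edge of $E(G)\setminus\tau(Y)$, $Y$ being the leaves on one side of $T-t$ (width 0 if $T$ has no edges). Directed branch-width $\operatorname{dbw}(D)$: same, with $\beta$ a bijection from leaves onto $E(D)$ and the order of $t$ equal to $|S^V_{\beta(Y)}\cup S^V_{E(D)\setminus\beta(Y)}|$, where $S^V_X=\{y: \exists x,z,\ \vec{xy}\in E(D)\setminus X,\ \vec{yz}\in X\}$. *)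

From mathcomp Require Import all_boot.
From Stdlib Require Import ClassicalEpsilon.

Set Implicit Arguments.
Unset Strict Implicit.
Unset Printing Implicit Defensive.

(* The empty graph counts as a tree (needed only for edgeless D). *)
Definition is_tree (T : finType) (t : rel T) : Prop :=
  [/\ symmetric t, irreflexive t, (forall x y : T, connect t x y)
    & (forall c : seq T, 3 <= size c -> ~~ (cycle t c && uniq c))].

Definition deg (T : finType) (t : rel T) (x : T) : nat := #|[set y | t x y]|.

Definition cut_rel (T : finType) (t : rel T) (a b : T) : rel T :=
  fun x y => t x y && ~~ (((x == a) && (y == b)) || ((x == b) && (y == a))).

(* There is a branch decomposition (T, beta) of the edge set E in which every
   edge ab of T has order f(X) <= k, X being the set of edges of E mapped to
   leaves on a's side of T - ab. beta : E -> leaves(T) is a bijection (its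
   inverse is the paper's tau). Leaves = vertices of degree <= 1. *)
Definition bdec_width_le (E : finType) (f : {set E} -> nat) (k : nat) : Prop :=
  exists (T : finType) (t : rel T) (beta : E -> T),
    [/\ is_tree t, (forall x, deg t x <= 3),
        injective beta /\ (forall e, deg t (beta e) <= 1),
        (forall x, deg t x <= 1 -> exists e, beta e = x)
      & (forall a b, t a b ->
           f [set e | connect (cut_rel t a b) a (beta e)] <= k)].

Definition least_nat (P : nat -> Prop) : nat :=
  epsilon (inhabits 0) (fun k => P k /\ forall j, P j -> k <= j).

(* undirected multigraph with vertices V, edges E, ends : E -> V * V *)
Definition ug_order (V E : finType) (ends : E -> V * V) (X : {set E}) : nat :=
  let inc e v := (v == (ends e).1) || (v == (ends e).2) in
  #|[set v : V | [exists e in X, inc e v] && [exists e in ~: X, inc e v]]|.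

Definition bw (V E : finType) (ends : E -> V * V) : nat :=
  least_nat (bdec_width_le (ug_order ends)).

(* digraph with vertices V, arcs E, arc e goes from tail e to head e *)
Definition SV (V E : finType) (tail head : E -> V) (X : {set E}) : {set V} :=
  [set y | [exists e in ~: X, head e == y] && [exists e in X, tail e == y]].

Definition dg_order (V E : finType) (tail head : E -> V) (X : {set E}) : nat :=
  #|SV tail head X :|: SV tail head (~: X)|.

Definition dbw (V E : finType) (tail head : E -> V) : nat :=
  least_nat (bdec_width_le (dg_order tail head)).

(* the underlying undirected multigraph u(D): one edge per arc *)
Definition u_ends (V E : finType) (tail head : E -> V) (e : E) : V * V :=
  (tail e, head e).

Definition sources_sinks (V E : finType) (tail head : E -> V) : {set V} :=
  [set v | [forall e, head e != v] || [forall e, tail e != v]].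

(* Both [bw (u_ends tail head)] and [dbw tail head] are least widths of branch
   decompositions of the same edge set E; they differ only in the order
   function measuring an edge cut (X, E \ X).  The theorem therefore reduces
   to two pointwise comparisons of these order functions:
   - every vertex counted by the directed order [dg_order] (it has an in-arc
     on one side and an out-arc on the other) is incident with both sides,
     hence is counted by the undirected order [ug_order];
   - a vertex incident with both sides that is neither a source nor a sink
     has an in-arc and an out-arc, and a short case analysis shows it is
     counted by [dg_order]; so [ug_order X <= dg_order X + |S|].
   A pointwise bound between order functions transfers to every branch
   decomposition ([bdec_width_le_shift]), and a general fact about least
   elements of two such comparable predicates ([least_nat_sandwich]) turns
   these into the two inequalities of the theorem. *)

From Stdlib Require Import ClassicalEpsilon FunctionalExtensionality PropExtensionality.
From mathcomp Require Import all_boot.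

Set Implicit Arguments.
Unset Strict Implicit.
Unset Printing Implicit Defensive.

Lemma least_nat_spec (P : nat -> Prop) : (exists k, P k) ->
  P (least_nat P) /\ forall j, P j -> least_nat P <= j.
Proof.
move=> [k Pk].
pose Pb j : bool := if excluded_middle_informative (P j) then true else false.
have PbP j : reflect (P j) (Pb j).
  by rewrite /Pb; case: excluded_middle_informative => ?; constructor.
have exPb : exists j, Pb j by exists k; apply/PbP.
have exmin : exists m, P m /\ forall j, P j -> m <= j.
  case: (ex_minnP exPb) => m /PbP Pm minm.
  by exists m; split=> // j /PbP; apply: minm.
exact: (epsilon_spec (inhabits 0) _ exmin).
Qed.

Lemma least_nat_sandwich (P Q : nat -> Prop) (s : nat) :
  (forall k, P k -> Q k) -> (forall k, Q k -> P (k + s)) ->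
  least_nat P - s <= least_nat Q <= least_nat P.
Proof.
move=> PQ QP.
have [[k Pk] | noP] := classic (exists k, P k).
  have [minP leP] := least_nat_spec (ex_intro _ k Pk).
  have [minQ leQ] := least_nat_spec (ex_intro _ k (PQ k Pk)).
  rewrite leq_subLR addnC; apply/andP; split; first exact/leP/QP.
  exact/leQ/PQ.
have eqPQ : P = Q.
  apply: functional_extensionality => k; apply: propositional_extensionality.
  split=> [Pk | Qk]; first by case: noP; exists k.
  by case: noP; exists (k + s); apply: QP.
by rewrite eqPQ leq_subr leqnn.
Qed.

Lemma bdec_width_le_shift (E : finType) (f g : {set E} -> nat) (c k : nat) :
  (forall X, g X <= f X + c) -> bdec_width_le f k -> bdec_width_le g (k + c).
Proof.
move=> gf [T [t [beta [tree_t deg3 beta_leaf leaf_beta width]]]].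
exists T, t, beta; split=> // a b tab.
by apply: leq_trans (gf _) _; rewrite leq_add2r width.
Qed.

Section Orders.
Variables (V E : finType) (tail head : E -> V).

Local Notation SV := (SV tail head).
Local Notation boundary := (ug_order (u_ends tail head)).
Local Notation S := (sources_sinks tail head).

Lemma SV_witness (X : {set E}) (v : V) (a b : E) :
  head a = v -> tail b = v -> a \notin X -> b \in X -> v \in SV X.
Proof.
move=> ha tb aX bX; rewrite inE; apply/andP; split; apply/existsP.
  by exists a; rewrite inE aX ha eqxx.
by exists b; rewrite bX tb eqxx.
Qed.

Lemma SVU_witness (X : {set E}) (v : V) (a b : E) :
  head a = v -> tail b = v -> (a \in X) != (b \in X) ->
  v \in SV X :|: SV (~: X).
Proof.
move=> ha tb; rewrite in_setU.
case aX: (a \in X); case bX: (b \in X) => //= _.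
  by rewrite (@SV_witness (~: X) v a b) ?orbT // !inE ?aX ?bX.
by rewrite (@SV_witness X v a b) ?aX ?bX.
Qed.

Lemma SVU_pair (X : {set E}) (v : V) : v \in SV X :|: SV (~: X) ->
  exists a b, [/\ head a = v, tail b = v & (a \in X) != (b \in X)].
Proof.
rewrite !inE; case/orP => /andP [/existsP [a /andP [aX /eqP ha]]
                                /existsP [b /andP [bX /eqP tb]]];
  exists a, b; split=> //; move: aX bX; rewrite !inE ?negbK.
  by move=> /negPf -> ->.
by move=> -> /negPf ->.
Qed.

Definition incident (e : E) (v : V) : bool := (v == tail e) || (v == head e).

Definition cut_vertices (X : {set E}) : {set V} :=
  [set v | [exists e in X, incident e v] && [exists e in ~: X, incident e v]].

Lemma ug_orderE (X : {set E}) : boundary X = #|cut_vertices X|.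
Proof.
by apply: eq_card => v; rewrite !inE.
Qed.

Lemma cut_vertices_witness (X : {set E}) (v : V) (a b : E) :
  incident a v -> incident b v -> (a \in X) != (b \in X) ->
  v \in cut_vertices X.
Proof.
move=> av bv; rewrite inE.
by case aX: (a \in X); case bX: (b \in X) => //= _;
  apply/andP; split; apply/existsP; [exists a | exists b | exists b | exists a];
  rewrite ?inE ?aX ?bX.
Qed.

Lemma dg_order_le_ug_order (X : {set E}) : dg_order tail head X <= boundary X.
Proof.
rewrite ug_orderE; apply: subset_leq_card; apply/subsetP => v.
case/SVU_pair => a [b [ha tb abX]].
by apply: (cut_vertices_witness (a := a) (b := b)); rewrite // /incident ?ha ?tb eqxx ?orbT.
Qed.

(* A cut vertex that is neither a source nor a sink has an in-arc a and an
   out-arc b; if they lie on one side, the arc of v on the other side pairs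
   up with a or b. *)
Lemma ug_order_le_dg_order_S (X : {set E}) :
  boundary X <= dg_order tail head X + #|S|.
Proof.
rewrite ug_orderE; apply: leq_trans (leq_card_setU _ _).
apply: subset_leq_card; apply/subsetP => v.
rewrite inE => /andP [/existsP [e1 /andP [e1X inc1]] /existsP [e2 /andP [e2X inc2]]].
have [vS | vNS] := boolP (v \in S); first by rewrite in_setU vS orbT.
rewrite in_setU; apply/orP; left.
move: vNS; rewrite inE negb_or !negb_forall.
case/andP => /existsP [a /negbNE /eqP ha] /existsP [b /negbNE /eqP tb].
have [ab | ] := boolP ((a \in X) != (b \in X)); first exact: SVU_witness ab.
rewrite negbK => /eqP abX.
have [e [ea ev]] : exists e, (e \in X) != (a \in X) /\ incident e v.
  rewrite inE in e2X.
  by case aX: (a \in X); [exists e2 | exists e1]; rewrite ?(negPf e2X) ?e1X.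
case/orP: ev => /eqP/esym ev.
  by apply: (@SVU_witness X v a e ha ev); rewrite eq_sym.
by apply: (@SVU_witness X v e b ev tb); rewrite -abX.
Qed.

End Orders.

Theorem mainTheorem10 (V E : finType) (tail head : E -> V)
  (loopless : forall e, tail e != head e)
  (simple : injective (fun e => (tail e, head e))) :
  bw (u_ends tail head) - #|sources_sinks tail head| <= dbw tail head
  <= bw (u_ends tail head).
Proof.
apply: least_nat_sandwich => k dec.
  by rewrite -[k]addn0; apply: bdec_width_le_shift dec => X;
     rewrite addn0 dg_order_le_ug_order.
exact: bdec_width_le_shift (@ug_order_le_dg_order_S _ _ tail head) dec.
Qed.
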